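(* Let $\beta$ be a totally positive quadratic integer with minimal polynomial $x^2 - Ex + C$, where $E, C \in \mathbb{Z}_{\geq 1}$, and let $n \geq 0$ be an integer. If $f \in \mathbb{Z}_{\geq 0}[x]$ satisfies $f(\beta) = E\beta^n$ and $f(x) \neq Ex^n$, then $f$ has the form \[ f(x) = x^{n+1} + a_n x^n + \dots + a_1 x + a_0 \] for some $a_0, \ldots, a_n \in \mathbb{Z}_{\geq 0}$.
   Context: A quadratic integer is a root of a monic irreducible quadratic polynomial in $\mathbb{Z}[x]$; it is totally positive if both it and its conjugate are positive real numbers. *)

From HB Require Import structures.
From mathcomp Require Import all_boot all_order all_algebra.
From mathcomp Require Import reals.
Set Implicit Arguments. Unset Strict Implicit. Unset Printing Implicit Defensive.
Import Order.TTheory GRing.Theory Num.Theory.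
Local Open Scope ring_scope.

Definition quad_poly (E C : int) : {poly int} := 'X^2 - E *: 'X + C%:P.

Definition is_quadratic_integer_with_minpoly (R : realType) (p : {poly int}) (b : R) :=
  [/\ p \is monic, size p = 3%N, irreducible_poly p & root (map_poly intr p) b].

(* Totally positive: beta and its conjugate (the other root of the minimal
   polynomial) are positive reals; since the minimal polynomial has real
   coefficients and one real root, the conjugate is also real, so this says
   every real root of p is positive. *)
Definition totally_positive (R : realType) (p : {poly int}) (b : R) :=
  0 < b /\ forall z : R, root (map_poly intr p) z -> 0 < z.

Definition nonneg_coefs (f : {poly int}) := forall i, 0 <= f`_i.

From HB Require Import structures.
From mathcomp Require Import all_boot all_order all_algebra.
From mathcomp Require Import reals.
From mathcomp Require Import ring lra zify.
Import Order.TTheory GRing.Theory Num.Theory.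
Set Implicit Arguments. Unset Strict Implicit. Unset Printing Implicit Defensive.
Local Open Scope ring_scope.

(* Proof idea: beta and its conjugate E - beta are distinct positive roots of
   x^2 - E x + C, and f - E x^n, which vanishes at beta, vanishes at the
   conjugate too.  Call r > s the two roots.  Their difference satisfies
   (r - s)^2 = E^2 - 4C >= 1, whence r^2 > r + s = E.  Nonnegativity of the
   coefficients then turns f(r) = E r^n < r^(n+2) into deg f <= n + 1, and
   f(r) < 2 r^(n+1) into a coefficient at most 1 in degree n + 1.  If this
   coefficient is 0, f(x) / x^n is a nonnegative combination of the powers
   x^(i-n), i <= n, taking the value E both at s and r; as x^(i-n) is strictly
   decreasing for i < n, f must be the monomial E x^n. *)

Lemma horner_intr_wide (R : numDomainType) (f : {poly int}) N (x : R) :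
  (size f <= N)%N -> (map_poly intr f).[x] = \sum_(i < N) (f`_i)%:~R * x ^+ i.
Proof.
move=> size_f; rewrite (@horner_coef_wide _ N) ?size_map_inj_poly //; last exact: intr_inj.
by apply: eq_bigr => i _; rewrite coef_map.
Qed.

Lemma poly_split_top (R : nzRingType) (f : {poly R}) n : (size f <= n.+2)%N ->
  f = f`_n.+1 *: 'X^(n.+1) + \sum_(i < n.+1) (f`_i)%:P * 'X^i.
Proof.
move=> size_f; have {1}-> : f = \poly_(i < n.+2) f`_i.
  apply/polyP => i; rewrite coef_poly; case: ltnP => // le_ni.
  by rewrite nth_default // (leq_trans size_f).
rewrite poly_def big_ord_recr /= addrC; congr (_ + _).
by apply: eq_bigr => i _; rewrite mul_polyC.
Qed.

Lemma expr_cross_lt (R : numDomainType) (r s : R) i n : 0 < s -> s < r -> (i < n)%N ->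
  r ^+ i * s ^+ n < s ^+ i * r ^+ n.
Proof.
move=> s_gt0 s_lt_r lt_in; rewrite -(subnKC (ltnW lt_in)) !exprD !mulrA [r ^+ i * _]mulrC.
have r_gt0 := lt_trans s_gt0 s_lt_r.
rewrite ltr_pM2l ?mulr_gt0 ?exprn_gt0 // (ltrXn2r _ (ltW s_gt0) s_lt_r).
by rewrite subn_eq0 -ltnNge.
Qed.

Lemma horner_quad_poly (R : comNzRingType) (E C : int) (x : R) :
  (map_poly intr (quad_poly E C)).[x] = x ^+ 2 - E%:~R * x + C%:~R.
Proof.
by rewrite /quad_poly rmorphD rmorphB /= map_polyXn map_polyZ map_polyX map_polyC !hornerE.
Qed.

Lemma root_quad_poly_conj (R : comNzRingType) (E C : int) (x : R) :
  root (map_poly intr (quad_poly E C)) x ->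
  root (map_poly intr (quad_poly E C)) (E%:~R - x).
Proof.
by rewrite /root !horner_quad_poly => /eqP hx; apply/eqP; rewrite -hx; ring.
Qed.

Section QuadraticConjugate.

Variables (R : realType) (E C : int) (beta : R).
Hypothesis hmin : is_quadratic_integer_with_minpoly (quad_poly E C) beta.

Local Notation q := (quad_poly E C).

Lemma horner_minpoly : beta ^+ 2 - E%:~R * beta + C%:~R = 0.
Proof. by case: hmin => _ _ _ /eqP; rewrite horner_quad_poly. Qed.

(* For a != 0 the integer b^2 + E a b + C a^2 = a^2 q(beta) vanishes, so that
   a^2 q = (a X + b) (a X - (E a + b)) and a X + b would be a proper factor of q. *)
Lemma intr_lin_eq0 (a b : int) : a%:~R * beta + b%:~R = 0 -> a = 0.
Proof.
move=> hab; apply/eqP; apply: contraT => a_neq0.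
have hc : b ^+ 2 + E * a * b + C * a ^+ 2 = 0.
  apply/eqP; rewrite -(intr_eq0 R) rmorphD rmorphD /= !rmorphM /=.
  have -> : b%:~R = - (a%:~R * beta) :> R by apply/eqP; rewrite -addr_eq0 addrC hab.
  by rewrite -[0 : R](mulr0 (a%:~R ^+ 2)) -horner_minpoly; apply/eqP; ring.
pose p1 : {poly int} := a%:P * 'X + b%:P.
have hfact : p1 * (a%:P * 'X - (E * a + b)%:P) = a ^+ 2 *: q.
  apply/eqP; rewrite -subr_eq0; apply/eqP.
  transitivity (- (b ^+ 2 + E * a * b + C * a ^+ 2)%:P); last by rewrite hc oppr0.
  by rewrite /p1 /q /quad_poly -!mul_polyC; ring.
have p1_dvd : p1 %| q by rewrite -(dvdpZr _ _ (expf_neq0 2 a_neq0)) -hfact dvdp_mulr.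
have size_p1 : size p1 = 2%N.
  by rewrite /p1 size_MXaddC polyC_eq0 (negPf a_neq0) /= size_polyC a_neq0.
case: hmin => _ size_q [_ irr_q] _.
have := irr_q p1; rewrite size_p1 => /(_ isT p1_dvd) /eqp_size.
by rewrite size_p1 size_q.
Qed.

(* The remainder of h modulo q is linear and vanishes at beta, hence is 0. *)
Lemma horner_conj_eq0 (h : {poly int}) :
  (map_poly intr h).[beta] = 0 -> (map_poly intr h).[E%:~R - beta] = 0.
Proof.
case: (hmin) => q_monic size_q _ q_root.
have ev (x : R) : (map_poly intr h).[x] = (map_poly intr (h %/ q)).[x] *
    (map_poly intr q).[x] + (((h %% q)`_0)%:~R + ((h %% q)`_1)%:~R * x).
  have size_r : (size (h %% q)%R <= 2)%N.
    by rewrite -ltnS -size_q ltn_modp -size_poly_gt0 size_q.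
  rewrite {1}(Pdiv.IdomainMonic.divp_eq q_monic h) rmorphD rmorphM /= hornerD hornerM.
  by rewrite (horner_intr_wide _ size_r) !big_ord_recl big_ord0 /= addr0 expr0 expr1 mulr1.
rewrite ev (eqP q_root) mulr0 add0r addrC => /[dup] /intr_lin_eq0 r1_eq0.
rewrite r1_eq0 mul0r add0r => r0_eq0.
rewrite ev r0_eq0 r1_eq0 mul0r addr0.
by move/root_quad_poly_conj/eqP: q_root ->; rewrite mulr0 addr0.
Qed.

Lemma horner_conj_eq (f g : {poly int}) :
  (map_poly intr f).[beta] = (map_poly intr g).[beta] ->
  (map_poly intr f).[E%:~R - beta] = (map_poly intr g).[E%:~R - beta].
Proof.
move=> hfg; apply/eqP; rewrite -subr_eq0; apply/eqP.
have := @horner_conj_eq0 (f - g); rewrite !rmorphB !hornerE; apply.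
by rewrite hfg subrr.
Qed.

Lemma conj_neq : beta != E%:~R - beta.
Proof.
apply/negP => /eqP beta_eq; suff /eqP : (2 : int) = 0 by [].
by apply: (@intr_lin_eq0 2 (- E)); rewrite rmorphN /=; move: beta_eq; lra.
Qed.

Lemma sqr_sub_conj : (beta - (E%:~R - beta)) ^+ 2 = (E ^+ 2 - 4 * C)%:~R.
Proof.
rewrite rmorphB !rmorphM /= -[RHS]addr0 -(mulr0 4) -horner_minpoly; ring.
Qed.

Lemma one_le_sqr_sub_conj : 1 <= (beta - (E%:~R - beta)) ^+ 2.
Proof.
have : 0 < (beta - (E%:~R - beta)) ^+ 2 by rewrite exprn_even_gt0 // subr_eq0 conj_neq.
by rewrite sqr_sub_conj ltr0z ler1z.
Qed.

End QuadraticConjugate.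

Section NonnegCoefs.

Variables (R : realFieldType) (f : {poly int}).
Hypothesis f_ge0 : nonneg_coefs f.

Lemma coef_horner_le (x : R) i : 0 <= x -> (f`_i)%:~R * x ^+ i <= (map_poly intr f).[x].
Proof.
move=> x_ge0; have size_f : (size f <= maxn (size f) i.+1)%N by rewrite leq_maxl.
have lt_i : (i < maxn (size f) i.+1)%N by rewrite leq_max ltnSn orbT.
rewrite (horner_intr_wide _ size_f) (bigD1 (Ordinal lt_i)) //= lerDl.
by apply: sumr_ge0 => j _; rewrite mulr_ge0 ?exprn_ge0 ?ler0z.
Qed.

Lemma coef_lt_of_horner_lt (x : R) i (k : int) : 0 < x ->
  (map_poly intr f).[x] < k%:~R * x ^+ i -> f`_i < k.
Proof.
move=> x_gt0 f_lt; rewrite -(ltr_int R) -(ltr_pM2r (exprn_gt0 i x_gt0)).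
exact: le_lt_trans (coef_horner_le i (ltW x_gt0)) f_lt.
Qed.

Lemma size_le_of_horner_lt (x : R) m : 1 <= x ->
  (map_poly intr f).[x] < x ^+ m -> (size f <= m)%N.
Proof.
move=> x_ge1 f_lt; apply/leq_sizeP => i le_mi.
have : f`_i < 1.
  apply: (@coef_lt_of_horner_lt x); first by lra.
  by rewrite mul1r (lt_le_trans f_lt) // ler_weXn2l.
by have := f_ge0 i; lia.
Qed.

Lemma monomial_of_horner_ratio (r s : R) n : 0 < s -> s < r -> (size f <= n.+1)%N ->
  (map_poly intr f).[r] * s ^+ n = (map_poly intr f).[s] * r ^+ n -> f = f`_n *: 'X^n.
Proof.
move=> s_gt0 s_lt_r size_f; rewrite !(horner_intr_wide _ size_f) !mulr_suml.
move/esym/eqP; rewrite -subr_eq0 -sumrB => /eqP sum0.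
have term_ge0 (i : 'I_n.+1) : true ->
    0 <= (f`_i)%:~R * s ^+ i * r ^+ n - (f`_i)%:~R * r ^+ i * s ^+ n.
  move=> _; rewrite -!mulrA -mulrBr mulr_ge0 ?ler0z // subr_ge0.
  have := ltn_ord i; rewrite ltnS leq_eqVlt => /orP [/eqP -> | lt_in].
    by rewrite mulrC.
  exact/ltW/expr_cross_lt.
apply/polyP => j; rewrite coefZ coefXn.
case: (ltngtP j n) => [lt_jn | lt_nj | ->]; last by rewrite mulr1.
- have := psumr_eq0P term_ge0 sum0 (i := Ordinal (leqW lt_jn)) isT.
  rewrite /= -!mulrA -mulrBr => /eqP; rewrite mulf_eq0 intr_eq0 subr_eq0 mulr0.
  case/orP => [/eqP // | /eqP cross_eq].
  by have := expr_cross_lt s_gt0 s_lt_r lt_jn; rewrite cross_eq ltxx.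
- by rewrite mulr0 nth_default // (leq_trans size_f).
Qed.

Lemma nonneg_coefs_eq_two_points (r s : R) (E n : nat) :
    0 < s -> s < r -> 1 <= (r - s) ^+ 2 -> r + s = E%:R ->
    (map_poly intr f).[r] = E%:R * r ^+ n -> (map_poly intr f).[s] = E%:R * s ^+ n ->
    f != E%:Z *: 'X^n ->
  exists a : 'I_n.+1 -> int,
    (forall i, 0 <= a i) /\ f = 'X^(n.+1) + \sum_(i < n.+1) (a i)%:P * 'X^i.
Proof.
move=> s_gt0 s_lt_r gap sum_rs f_r f_s f_neq.
have gap1 : 1 <= r - s by nra.
have r_gt0 : 0 < r by lra.
have rn_gt0 := exprn_gt0 n r_gt0.
have size_f : (size f <= n.+2)%N.
  apply: (@size_le_of_horner_lt r); first by lra.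
  rewrite f_r -sum_rs -addn2 exprD mulrC ltr_pM2l //; nra.
have top_lt2 : f`_n.+1 < 2.
  apply: (coef_lt_of_horner_lt r_gt0).
  rewrite f_r -sum_rs exprS mulrA ltr_pM2r //; lra.
have /orP [/eqP top0 | /eqP top1] : (f`_n.+1 == 0) || (f`_n.+1 == 1).
  by have := f_ge0 n.+1; lia.
- have size_f' : (size f <= n.+1)%N.
    apply/leq_sizeP => j; rewrite leq_eqVlt => /orP [/eqP <- // | ].
    exact: (leq_sizeP _ _ size_f).
  have f_mono : f = f`_n *: 'X^n.
    by apply: (monomial_of_horner_ratio s_gt0 s_lt_r size_f'); rewrite f_r f_s mulrAC.
  move: f_r; rewrite {1}f_mono map_polyZ map_polyXn hornerZ hornerXn.
  move/(mulIf (lt0r_neq0 rn_gt0)) => fn_eqR.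
  have fn_eq : f`_n = E%:Z by apply: (@intr_inj R).
  by move: f_neq; rewrite {1}f_mono fn_eq eqxx.
- exists (fun i : 'I_n.+1 => f`_i); split => [i|]; first exact: f_ge0.
  by rewrite {1}(poly_split_top size_f) top1 scale1r.
Qed.

End NonnegCoefs.

Theorem lemma10 (R : realType) (beta : R) (E C : nat) (n : nat)
  (hE : (1 <= E)%N) (hC : (1 <= C)%N)
  (hmin : is_quadratic_integer_with_minpoly (quad_poly E%:Z C%:Z) beta)
  (htp : totally_positive (quad_poly E%:Z C%:Z) beta)
  (f : {poly int}) (hf : nonneg_coefs f)
  (hval : (map_poly intr f).[beta] = E%:R * beta ^+ n)
  (hne : f != E%:Z *: 'X^n) :
  exists a : 'I_n.+1 -> int,
    (forall i, 0 <= a i) /\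
    f = 'X^(n.+1) + \sum_(i < n.+1) (a i)%:P * 'X^i :> {poly int}.
Proof.
(* hE and hC are implied by total positivity: E and C are the sum and product of the roots. *)
case: htp => beta_gt0 roots_gt0.
set s := E%:Z%:~R - beta.
have s_gt0 : 0 < s by case: (hmin) => _ _ _ /root_quad_poly_conj /roots_gt0.
have f_s : (map_poly intr f).[s] = E%:R * s ^+ n.
  have := horner_conj_eq hmin (g := E%:Z *: 'X^n).
  by rewrite !map_polyZ !map_polyXn !hornerZ !hornerXn; apply.
have gap := one_le_sqr_sub_conj hmin.
have sum_beta_s : beta + s = E%:R by rewrite addrC subrK.
case: (ltgtP beta s) => [beta_lt_s | s_lt_beta | beta_eq_s].
- have gap' : 1 <= (s - beta) ^+ 2 by rewrite -sqrrN opprB.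
  have sum_s_beta : s + beta = E%:R by rewrite addrC.
  exact: (nonneg_coefs_eq_two_points hf beta_gt0 beta_lt_s gap' sum_s_beta f_s hval hne).
- exact: (nonneg_coefs_eq_two_points hf s_gt0 s_lt_beta gap sum_beta_s hval f_s hne).
- by have := conj_neq hmin; rewrite -/s beta_eq_s eqxx.
Qed.
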